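(* (a) Let $k\ge 4$ be even and let $C_k=v_1v_2\cdots v_kv_1$. For every homomorphism $g$ from $\bar C_k$ to $\bar C_k$ that is not surjective on vertices, there are two distinct vertices $x\ne y$ with $g(x)=g(y)\in\{v_1,v_k\}$. (b) Let $k\ge 4$ and $P_k=v_1v_2\cdots v_k$. For every homomorphism $g$ from $\bar P_k$ to $\bar P_k$ that is not surjective on vertices, there are two distinct vertices $x\ne y$ with $g(x)=g(y)\in\{v_1,v_k\}$.
   Context: $\bar F$ denotes the complement of $F$. A homomorphism $F\to F'$ is a map $V(F)\to V(F')$ sending edges to edges. *)

From mathcomp Require Import all_boot.
Set Implicit Arguments. Unset Strict Implicit. Unset Printing Implicit Defensive.

(* Vertex v_i (1 <= i <= k) is represented by the ordinal i-1 : 'I_k. *)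

Definition cycle_adj (k : nat) : rel 'I_k :=
  fun i j => ((i.+1 %% k) == j) || ((j.+1 %% k) == i).

Definition path_adj (k : nat) : rel 'I_k :=
  fun i j => (i.+1 == j) || (j.+1 == i).

Definition compl_graph (T : finType) (e : rel T) : rel T :=
  fun x y => (x != y) && ~~ e x y.

Definition is_hom (T T' : finType) (e : rel T) (e' : rel T') (f : T -> T') : Prop :=
  forall x y, e x y -> e' (f x) (f y).

Definition vsurj (T T' : finType) (f : T -> T') : Prop :=
  forall w : T', exists x, f x = w.

From mathcomp Require Import all_boot zify.
Set Implicit Arguments. Unset Strict Implicit. Unset Printing Implicit Defensive.

(* Let [e] be a symmetric triangle-free graph and [g] an endomorphism of its
   complement. A non-edge of the complement is an edge of [e] or a diagonal
   pair, and [g] reflects both, so every fibre of [g] spans a clique of [e]: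
   fibres have at most two points, the doubled vertices are exactly as many as
   the missed ones, and every [e]-neighbour of a doubled vertex is missed. When
   [e] contains the path v_1 ... v_k, a doubled interior vertex v_i has both
   v_(i-1) and v_(i+1) missed, so v_i |-> v_(i+1) injects the doubled vertices
   into the missed ones other than the first; if [g] is not surjective this
   contradicts the count unless v_1 or v_k is doubled. *)

Definition triangle_free (T : finType) (e : rel T) : Prop :=
  forall x y z, x != y -> y != z -> x != z -> e x y -> e y z -> e x z -> False.

Section Fibres.
Variables (T : finType) (e : rel T) (g : T -> T).
Hypotheses (e_sym : symmetric e) (e_triangle_free : triangle_free e).
Hypothesis g_hom : is_hom (compl_graph e) (compl_graph e) g.

Definition fibre (v : T) : {set T} := [set x | g x == v].

Definition doubled : {set T} := [set v | #|fibre v| == 2].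
Definition missed : {set T} := [set v | #|fibre v| == 0].

Lemma adj_of_hom_image x y : x != y -> g x = g y \/ e (g x) (g y) -> e x y.
Proof.
move=> nxy gxy; apply/negPn/negP => nexy.
have /andP [ngxy ne_gxy] := g_hom (introT andP (conj nxy nexy)).
by case: gxy => [gxy | e_gxy]; [rewrite gxy eqxx in ngxy | rewrite e_gxy in ne_gxy].
Qed.

Lemma card_fibre_le2 v : #|fibre v| <= 2.
Proof.
rewrite leqNgt; apply/card_gt2P => -[x [y [z [[]]]]].
rewrite !inE => /eqP gx /eqP gy /eqP gz [nxy nyz nzx].
have nxz : x != z by rewrite eq_sym.
apply: (e_triangle_free nxy nyz nxz); apply: adj_of_hom_image => //; left.
- by rewrite gx gy.
- by rewrite gy gz.
- by rewrite gx gz.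
Qed.

(* The two preimages of [a] and any preimage of [b] would span a triangle. *)
Lemma fibre_adj_doubled a b : a \in doubled -> e a b -> a != b -> fibre b = set0.
Proof.
rewrite inE => /eqP a2 eab nab; have /card_gt1P [x [y []]] : 1 < #|fibre a| by rewrite a2.
rewrite !inE => /eqP gx /eqP gy nxy.
apply/setP => z; rewrite !inE; apply/negbTE/eqP => gz.
have nzx : z != x by apply: contraNneq nab => zx; rewrite -gx -gz zx.
have nzy : z != y by apply: contraNneq nab => zy; rewrite -gy -gz zy.
apply: (e_triangle_free nzx nxy nzy); apply: adj_of_hom_image => //.
- by right; rewrite gz gx e_sym.
- by left; rewrite gx gy.
- by right; rewrite gz gy e_sym.
Qed.

Lemma sum_card_fibre : \sum_v #|fibre v| = #|T|.
Proof.
rewrite -[RHS]sum1_card [RHS](partition_big g xpredT) //=.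
by apply: eq_bigr => v _; rewrite sum1dep_card.
Qed.

(* Each fibre has size 0, 1 or 2, so [#|fibre v| + [v missed] = 1 + [v doubled]]. *)
Lemma card_doubled : #|doubled| = #|missed|.
Proof.
have count_set (P : pred T) : \sum_v (P v : nat) = #|[set v | P v]|.
  by rewrite -sum1dep_card [RHS]big_mkcond; apply: eq_bigr => v _; case: (P v).
have : \sum_v (#|fibre v| + (#|fibre v| == 0 : nat)) =
       \sum_v (1 + (#|fibre v| == 2 : nat)).
  by apply: eq_bigr => v _; have := card_fibre_le2 v; case: #|fibre v| => [|[|[|]]].
by rewrite !big_split /= sum_card_fibre sum1_card !count_set => /addnI.
Qed.

End Fibres.

Section PathComplement.
Variables (n : nat) (e : rel 'I_n.+1) (g : 'I_n.+1 -> 'I_n.+1).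
Hypotheses (e_sym : symmetric e) (e_triangle_free : triangle_free e).
Hypothesis e_path : forall a b : 'I_n.+1, b = a.+1 :> nat -> e a b.
Hypothesis g_hom : is_hom (compl_graph e) (compl_graph e) g.

Lemma missed_neq0 : ~ vsurj g -> missed g != set0.
Proof.
move=> g_nsurj; apply/set0Pn; case: (set_0Vmem (missed g)) => [M0 | [w wM]]; last by exists w.
case: g_nsurj => w; have : w \notin missed g by rewrite M0 inE.
by rewrite inE -lt0n => /card_gt0P [x]; rewrite inE => /eqP; exists x.
Qed.

Lemma missed_path_nbr a (b : 'I_n.+1) : a \in doubled g ->
  (b == a.+1 :> nat) || (a == b.+1 :> nat) -> b \in missed g.
Proof.
move=> aD ab; rewrite inE (fibre_adj_doubled e_sym e_triangle_free g_hom aD) ?cards0 //.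
  by case/orP: ab => /eqP ab; [apply: e_path | rewrite e_sym; apply: e_path].
by apply: contraTneq ab => ->; rewrite orbb ltn_eqF.
Qed.

Lemma doubled_end : ~ vsurj g -> (ord0 \in doubled g) || (ord_max \in doubled g).
Proof.
move=> g_nsurj; apply/negPn/negP; rewrite negb_or => /andP [D0 Dn].
have D_interior a : a \in doubled g -> 0 < a < n.
  move=> aD; have a0 : a != ord0 by apply: contraTneq aD => ->.
  have an : a != ord_max by apply: contraTneq aD => ->.
  by move: a0 an; rewrite -!val_eqE /=; have := ltn_ord a; lia.
have [w wM] := set0Pn _ (missed_neq0 g_nsurj).
case: (arg_minnP val wM) => m mM m_min.
pose f (a : 'I_n.+1) : 'I_n.+1 := inord a.+1.
have f_val a : a \in doubled g -> val (f a) = a.+1.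
  by move/D_interior => a_int; rewrite /= inordK //; lia.
have f_inj : {in doubled g &, injective f}.
  by move=> a b aD bD /(congr1 val); rewrite !f_val // => -[] /val_inj.
have f_sub : f @: doubled g \subset missed g :\ m.
  apply/subsetP => _ /imsetP [a aD ->]; rewrite in_setD1.
  have fM : f a \in missed g by apply: (missed_path_nbr aD); rewrite f_val ?eqxx.
  have a_int := D_interior a aD.
  have pM : inord a.-1 \in missed g.
    by apply: (missed_path_nbr aD); rewrite /= inordK; lia.
  rewrite fM andbT; apply: contraTneq (m_min _ pM) => <-.
  by rewrite f_val // /= inordK; lia.
have mM_in : m \in missed g by [].
have := subset_leq_card f_sub.
by rewrite card_in_imset // (card_doubled e_triangle_free g_hom) (cardsD1 m) mM_in add1n ltnn.
Qed.

Lemma compl_hom_collision_at_end : ~ vsurj g ->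
  exists x y, x != y /\ g x = g y /\ (val (g x) = 0 \/ val (g x) = n).
Proof.
move=> g_nsurj; have [v vD v_end] : exists2 v, v \in doubled g & val v = 0 \/ val v = n.
  by case/orP: (doubled_end g_nsurj) => vD; [exists ord0; last left | exists ord_max; last right].
have /card_gt1P [x [y [+ + nxy]]] : 1 < #|fibre g v| by move: vD; rewrite inE => /eqP ->.
by rewrite !inE => /eqP gx /eqP gy; exists x, y; rewrite gx gy.
Qed.

End PathComplement.

Lemma cycle_adj_sym k : symmetric (@cycle_adj k).
Proof. by move=> x y; rewrite /cycle_adj orbC. Qed.

Lemma cycle_adj_succ k (a b : 'I_k) : b = a.+1 :> nat -> cycle_adj a b.
Proof. by move=> ab; rewrite /cycle_adj -ab modn_small ?eqxx. Qed.

Lemma cycle_adj_triangle_free k : 4 <= k -> triangle_free (@cycle_adj k).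
Proof.
move=> k4 x y z; rewrite /cycle_adj.
have succ_mod (a : 'I_k) : a.+1 %% k = if a.+1 == k then 0 else a.+1.
  by case: eqP => [-> | ak]; rewrite ?modnn // modn_small // ltn_neqAle (ltn_ord a) andbT; apply/eqP.
rewrite !succ_mod; have := ltn_ord x; have := ltn_ord y; have := ltn_ord z.
by case: (x.+1 =P k); case: (y.+1 =P k); case: (z.+1 =P k); lia.
Qed.

Lemma path_adj_sym k : symmetric (@path_adj k).
Proof. by move=> x y; rewrite /path_adj orbC. Qed.

Lemma path_adj_succ k (a b : 'I_k) : b = a.+1 :> nat -> path_adj a b.
Proof. by move=> ab; rewrite /path_adj -ab eqxx. Qed.

Lemma path_adj_triangle_free k : triangle_free (@path_adj k).
Proof. by move=> x y z; rewrite /path_adj; lia. Qed.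

Theorem lemma12 :
  (forall (k : nat), 4 <= k -> ~~ odd k ->
     forall g : 'I_k -> 'I_k,
       is_hom (compl_graph (@cycle_adj k)) (compl_graph (@cycle_adj k)) g ->
       ~ vsurj g ->
       exists x y : 'I_k, x != y /\ g x = g y /\
         (val (g x) = 0 \/ val (g x) = k.-1))
  /\
  (forall (k : nat), 4 <= k ->
     forall g : 'I_k -> 'I_k,
       is_hom (compl_graph (@path_adj k)) (compl_graph (@path_adj k)) g ->
       ~ vsurj g ->
       exists x y : 'I_k, x != y /\ g x = g y /\
         (val (g x) = 0 \/ val (g x) = k.-1)).
Proof.
split=> -[// | n] k4.
- (* Parity is irrelevant: C_k is triangle-free for every k >= 4. *)
  move=> _ g; apply: compl_hom_collision_at_end.
  + exact: cycle_adj_sym.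
  + exact: cycle_adj_triangle_free.
  + exact: cycle_adj_succ.
- move=> g; apply: compl_hom_collision_at_end.
  + exact: path_adj_sym.
  + exact: path_adj_triangle_free.
  + exact: path_adj_succ.
Qed.
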